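(* For each of the following tableaux $D$ (listed by rows) and vector spaces $W$, the map $\rho(D)$ defined below is nonzero: $D_1$ with rows $(1,1,1,2,2,3,3)$, $(2)$, $(3)$ and $\dim W=7$; $D_2$ with rows $(1,1,1,2,2,3,3,4)$, $(2,4,4)$, $(3)$ and $\dim W=8$; $D_3$ with rows $(1,1,1,2,2,3,3,4,4)$, $(2)$, $(3)$, $(4)$ and $\dim W=9$; $D_4$ with rows $(1,1,1,2,2,3,3,4,5)$, $(2,4,4,5)$, $(3,5)$ and $\dim W=9$.
   Context: $K$ is an algebraically closed field of characteristic zero. A numbering scheme $D$ is a Young tableau with $3d$ boxes filled with $1,\dots,d$, each number occurring exactly three times, weakly increasing along rows and strictly increasing down columns. Let its rows have lengths $\ell_1,\dots,\ell_r$ and let $e_{i,s}$ be the number of entries equal to $s$ in row $i$ (so $\sum_i e_{i,s}=3$). The map $\rho(D):\Lambda^{\ell_1}W\otimes\cdots\otimes\Lambda^{\ell_r}W\to S^d(\Lambda^3W)$ is the composition of: (a) for each $i$, the comultiplication $\Lambda^{\ell_i}W\to\Lambda^{e_{i,1}}W\otimes\cdots\otimes\Lambda^{e_{i,d}}W$; (b) after rearranging factors, for each $s$ the multiplication $\Lambda^{e_{1,s}}W\otimes\cdots\otimes\Lambda^{e_{r,s}}W\to\Lambda^3W$, tensored over $s=1,\dots,d$ to land in $(\Lambda^3W)^{\otimes d}$; (c) the symmetrization $(\Lambda^3W)^{\otimes d}\to S^d(\Lambda^3W)$. *)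

From HB Require Import structures.
From mathcomp Require Import all_boot all_order all_algebra.
From mathcomp Require Import mpoly.

Set Implicit Arguments.
Unset Strict Implicit.
Unset Printing Implicit Defensive.

Import Order.TTheory GRing.Theory.
Local Open Scope ring_scope.

(* W = K^n with standard basis e_0,...,e_{n-1}.  Lambda W has basis
   e_A = e_{a_1} /\ ... /\ e_{a_k} (a_1 < ... < a_k) for A : {set 'I_n}.  *)

Section Rho.
Variable K : fieldType.
Variable n : nat.

Definition wedge_inv (m : nat) (C : 'I_m -> {set 'I_n}) : nat :=
  (\sum_(j < m) \sum_(k < m | (j < k)%N)
     #|[set p : 'I_n * 'I_n | [&& p.1 \in C j, p.2 \in C k & (p.2 < p.1)%N]]|)%N.

(* coefficient of e_T in the wedge product e_{C_0} /\ e_{C_1} /\ ... /\ e_{C_{m-1}} *)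
Definition wcoef (m : nat) (C : 'I_m -> {set 'I_n}) (T : {set 'I_n}) : K :=
  if [forall j : 'I_m, forall k : 'I_m, (j != k) ==> [disjoint C j & C k]]
     && (\bigcup_(j < m) C j == T)
  then (-1) ^+ wedge_inv C else 0.

(* coefficient of e_{B_0} (x) ... (x) e_{B_{d-1}} in the comultiplication
   Lambda^l W -> Lambda^{e_0} W (x) ... (x) Lambda^{e_{d-1}} W applied to e_A:
   the signed sum over shuffles, i.e. the coefficient of e_A in
   e_{B_0} /\ ... /\ e_{B_{d-1}}, restricted to the prescribed block sizes. *)
Definition comult_coef (d : nat) (e : 'I_d -> nat)
    (A : {set 'I_n}) (B : 'I_d -> {set 'I_n}) : K :=
  if [forall s : 'I_d, #|B s| == e s] then wcoef B A else 0.

(* variables of the symmetric algebra S(Lambda W) = polynomial ring on the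
   basis {e_T}; we index variables by all subsets, S(Lambda^3 W) is the
   subring generated by the variables with #|T| = 3. *)
Definition NV := #|{set 'I_n}|.
Definition Sym := {mpoly K[NV]}.
Definition var (T : {set 'I_n}) : Sym := 'X_(enum_rank T).

Section Tableau.
(* D given by its rows; entries 1..d *)
Variable D : seq (seq nat).
Definition nrows : nat := size D.
Definition dd : nat := (sumn (map size D) %/ 3)%N.
Definition row (i : 'I_nrows) : seq nat := nth [::] D i.
Definition rowlen (i : 'I_nrows) : nat := size (row i).
(* e_{i,s}: number of entries s+1 in row i (entries are 1-indexed) *)
Definition ecount (i : 'I_nrows) (s : 'I_dd) : nat := count_mem s.+1 (row i).

(* tensors in Lambda W^{(x) r}, written in the basis e_{A_0} (x) ... (x) e_{A_{r-1}} *)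
Definition tensorIn := {ffun {ffun 'I_nrows -> {set 'I_n}} -> K}.

(* step (a): apply comultiplication to each factor;
   result in (x)_i (x)_s Lambda^{e_{i,s}} W *)
Definition stepA (t : tensorIn) : {ffun {ffun 'I_nrows -> {ffun 'I_dd -> {set 'I_n}}} -> K} :=
  [ffun B : {ffun 'I_nrows -> {ffun 'I_dd -> {set 'I_n}}} => \sum_(A : {ffun 'I_nrows -> {set 'I_n}})
               t A * \prod_(i < nrows) comult_coef (ecount i) (A i) (B i)].

(* step (b): rearrange factors and, for each s, multiply
   Lambda^{e_{0,s}} (x) ... (x) Lambda^{e_{r-1,s}} -> Lambda^3 W *)
Definition stepB (c : {ffun {ffun 'I_nrows -> {ffun 'I_dd -> {set 'I_n}}} -> K})
    : {ffun {ffun 'I_dd -> {set 'I_n}} -> K} :=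
  [ffun T : {ffun 'I_dd -> {set 'I_n}} => if [forall s, #|T s| == 3%N] then
     \sum_(B : {ffun 'I_nrows -> {ffun 'I_dd -> {set 'I_n}}})
        c B * \prod_(s < dd) wcoef (fun i => B i s) (T s)
     else 0].

(* step (c): symmetrization (Lambda^3 W)^{(x) d} -> S^d(Lambda^3 W),
   e_{T_0} (x) ... (x) e_{T_{d-1}} |-> e_{T_0} ... e_{T_{d-1}} *)
Definition stepC (m : {ffun {ffun 'I_dd -> {set 'I_n}} -> K}) : Sym :=
  \sum_(T : {ffun 'I_dd -> {set 'I_n}}) m T *: \prod_(s < dd) var (T s).

Definition rho (t : tensorIn) : Sym := stepC (stepB (stepA t)).

(* t lies in Lambda^{l_0} W (x) ... (x) Lambda^{l_{r-1}} W *)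
Definition in_domain (t : tensorIn) : Prop :=
  forall A, t A != 0 -> forall i, #|A i| = rowlen i.

Definition rho_nonzero : Prop := exists t : tensorIn, in_domain t /\ rho t != 0.

End Tableau.
End Rho.

Definition D1 : seq (seq nat) := [:: [:: 1;1;1;2;2;3;3]; [:: 2]; [:: 3]]%N.
Definition D2 : seq (seq nat) := [:: [:: 1;1;1;2;2;3;3;4]; [:: 2;4;4]; [:: 3]]%N.
Definition D3 : seq (seq nat) := [:: [:: 1;1;1;2;2;3;3;4;4]; [:: 2]; [:: 3]; [:: 4]]%N.
Definition D4 : seq (seq nat) := [:: [:: 1;1;1;2;2;3;3;4;5]; [:: 2;4;4;5]; [:: 3;5]]%N.

From HB Require Import structures.
From mathcomp Require Import all_boot all_order all_algebra.
From mathcomp Require Import mpoly.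
Import GRing.Theory.
Local Open Scope ring_scope.
Set Implicit Arguments. Unset Strict Implicit. Unset Printing Implicit Defensive.

(* Take for t a basis tensor e_{A_1} (x) ... (x) e_{A_r} and evaluate the polynomial
   rho(D)(t) at the point which is 1 on the variables e_T with T in a set S of triples
   and 0 on all others.  Only the column tuples (T_1, ..., T_d) in S^d survive, and each
   contributes a signed sum over the ways of distributing every A_i among the columns,
   i.e. over labellings of the elements of the A_i by columns.  For suitable A and S this
   integer, computed by reflection, is nonzero; in characteristic zero so is rho(D)(t). *)

Fixpoint cartprod (T : Type) (L : seq (seq T)) : seq (seq T) :=
  if L is a :: L' then [seq x :: p | x <- a, p <- cartprod L'] else [:: [::]].

Lemma cartprodP (T : eqType) (x0 : T) (xs : seq T) (L : seq (seq T)) :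
  reflect (size xs = size L /\ forall i, (i < size L)%N -> nth x0 xs i \in nth [::] L i)
          (xs \in cartprod L).
Proof.
elim: L xs => [|a L IH] [|x xs] /=.
- by rewrite inE eqxx; constructor.
- by rewrite inE; constructor; case.
- by apply: (iffP idP) => [/allpairsP [[y p] []]|[]].
apply: (iffP idP).
- move=> /allpairsP [[y p] /= [ya /IH [Hs Hn] [-> ->]]].
  by split=> [|[|i] //= Hi]; [rewrite Hs | exact: Hn].
- case=> [[Hs] Hn]; apply/allpairsP; exists (x, xs); split=> //=.
  + exact: (Hn 0%N).
  + by apply/IH; split=> // i; apply: (Hn i.+1).
Qed.

Lemma cartprod_uniq (T : eqType) (L : seq (seq T)) :
  all uniq L -> uniq (cartprod L).
Proof.
elim: L => [|a L IH] //= /andP [ua uL].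
by apply: allpairs_uniq => // [|[x p] [y q] _ _ /= [-> ->]]; [exact: IH |].
Qed.

Lemma big_ord_iota0 (R : Type) (idx : R) (op : R -> R -> R) m (P : pred nat) (F : nat -> R) :
  \big[op/idx]_(i < m | P i) F i = \big[op/idx]_(i <- iota 0 m | P i) F i.
Proof. by rewrite -big_mkord /index_iota subn0. Qed.

Lemma sum_supp_seq (I : finType) (V : nmodType) (F : I -> V) (L : seq I) :
  uniq L -> (forall x, F x != 0 -> x \in L) -> \sum_x F x = \sum_(x <- L) F x.
Proof.
move=> uL HL; rewrite (big_uniq _ uL) [RHS]big_mkcond; apply: eq_bigr => x _.
by case: ifP => // xL; apply/eqP; apply: contraFT xL; exact: HL.
Qed.

(* Big operators are locked and do not reduce under [vm_compute]; the computable
   counterparts of the definitions of rho below use folds over [iota] instead. *)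
Definition sumz (s : seq int) : int := foldr +%R 0 s.
Definition prodz (s : seq int) : int := foldr *%R 1 s.

Lemma intr_sumz (K : pzRingType) (s : seq int) : (sumz s)%:~R = \sum_(x <- s) (x%:~R : K).
Proof. by elim: s => [|x s IH]; rewrite ?big_nil ?big_cons //= intrD IH. Qed.

Lemma intr_prodz (K : comPzRingType) (s : seq int) : (prodz s)%:~R = \prod_(x <- s) (x%:~R : K).
Proof. by elim: s => [|x s IH]; rewrite ?big_nil ?big_cons //= intrM IH. Qed.

Lemma card_ord_count n (X : {set 'I_n}) (P : pred nat) :
  (forall a : 'I_n, (a \in X) = P a) -> #|X| = count P (iota 0 n).
Proof.
move=> HX; rewrite -sum1_card -sum1_count -big_ord_iota0.
by apply: eq_bigl => a; rewrite HX.
Qed.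

Lemma mem_iota0 a k : (a \in iota 0 k) = (a < k)%N.
Proof. by rewrite mem_iota. Qed.

Lemma forall_ord_iota0 m (P : pred nat) : [forall i : 'I_m, P i] = all P (iota 0 m).
Proof.
apply/forallP/allP => [H a | H i]; last by apply: H; rewrite mem_iota0.
by rewrite mem_iota0 => am; exact: (H (Ordinal am)).
Qed.

Lemma intr_eq0_pchar0 (K : idomainType) (z : int) :
  [pchar K] =i pred0 -> ((z%:~R : K) == 0) = (z == 0).
Proof.
move=> /pcharf0P charK0; case: z => k; first by rewrite -pmulrn charK0.
by rewrite NegzE mulrNz oppr_eq0 -pmulrn charK0.
Qed.

Lemma wcoef_neq0 (K : fieldType) n m (C : 'I_m -> {set 'I_n}) (T : {set 'I_n}) :
  wcoef K C T != 0 ->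
  (forall j k, j != k -> [disjoint C j & C k]) /\ \bigcup_(j < m) C j = T.
Proof.
rewrite /wcoef; case: ifP => [/andP [/forallP H /eqP U] _ | _]; last by rewrite eqxx.
by split=> // j k; apply/implyP/(forallP (H j)).
Qed.

Definition block_index n m (C : 'I_m -> {set 'I_n}) (a : 'I_n) : nat :=
  if [pick s | a \in C s] is Some s then val s else 0%N.

Lemma mem_block n m (C : 'I_m -> {set 'I_n}) (T : {set 'I_n}) :
  (forall j k, j != k -> [disjoint C j & C k]) -> \bigcup_(j < m) C j = T ->
  forall s a, (a \in C s) = (a \in T) && (block_index C a == s).
Proof.
move=> Cdisj <- s a; rewrite /block_index; case: pickP => [s' Cs' | Cnone].
- have -> : (a \in \bigcup_(j < m) C j) by apply/bigcupP; exists s'.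
  apply/idP/eqP => [Cs | /val_inj <- //]; congr val.
  by apply/eqP/negPn/negP => /Cdisj/disjointFr/(_ Cs'); rewrite Cs.
- by rewrite Cnone; apply/esym/andP => [[/bigcupP [j _]]]; rewrite Cnone.
Qed.

Definition blocks_disjoint (m n : nat) (P : nat -> nat -> bool) : bool :=
  all (fun j => all (fun k => (j == k) || all (fun a => ~~ (P j a && P k a)) (iota 0 n))
                    (iota 0 m)) (iota 0 m).

Definition blocks_cover (m n : nat) (P : nat -> nat -> bool) (Q : pred nat) : bool :=
  all (fun a => has (P^~ a) (iota 0 m) == Q a) (iota 0 n).

Definition blocks_inv (m n : nat) (P : nat -> nat -> bool) : nat :=
  sumn [seq sumn [seq sumn [seq count (fun b => P k b && (b < a)%N) (iota 0 n)
                              | a <- iota 0 n & P j a]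
                   | k <- iota 0 m & (j < k)%N] | j <- iota 0 m].

Definition wcoefz (m n : nat) (P : nat -> nat -> bool) (Q : pred nat) : int :=
  if blocks_disjoint m n P && blocks_cover m n P Q then (-1) ^+ blocks_inv m n P else 0.

Section WcoefReflection.
Variables (m n : nat) (C : 'I_m -> {set 'I_n}) (P : nat -> nat -> bool).
Hypothesis memC : forall (j : 'I_m) (a : 'I_n), (a \in C j) = P j a.

Lemma blocks_disjointE :
  [forall j, forall k, (j != k) ==> [disjoint C j & C k]] = blocks_disjoint m n P.
Proof.
apply/idP/allP => [/forallP H j | H].
- rewrite mem_iota0 => jm; apply/allP => k; rewrite mem_iota0 => km.
  case: eqP => //= jk; apply/allP => a; rewrite mem_iota0 => an.
  have jk' : Ordinal jm != Ordinal km by apply/eqP => [[]].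
  have Hd := implyP (forallP (H (Ordinal jm)) (Ordinal km)) jk'.
  apply/negP => /andP [Pja Pka].
  by have := disjointFr (x := Ordinal an) Hd; rewrite !memC Pja Pka => /(_ isT).
- apply/forallP => j; apply/forallP => k; apply/implyP => jk.
  have := H j; rewrite mem_iota0 ltn_ord => /(_ isT) /allP /(_ k).
  rewrite mem_iota0 ltn_ord => /(_ isT).
  have /negbTE -> : val j != val k by [].
  move=> /allP Ha; rewrite disjoint_subset; apply/subsetP => a.
  rewrite inE /= !memC => Pj.
  by have := Ha a; rewrite mem_iota0 ltn_ord Pj => /(_ isT).
Qed.

Lemma blocks_coverE (T : {set 'I_n}) (Q : pred nat) :
  (forall a : 'I_n, (a \in T) = Q a) ->
  (\bigcup_(j < m) C j == T) = blocks_cover m n P Q.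
Proof.
have memU (a : 'I_n) : (a \in \bigcup_(j < m) C j) = has (P^~ a) (iota 0 m).
  apply/bigcupP/hasP => [[j _ Cja] | [j]].
  - by exists (val j); rewrite ?mem_iota0 //= -memC.
  - by rewrite mem_iota0 => jm Pja; exists (Ordinal jm); rewrite ?memC.
move=> memT; apply/eqP/allP => [U a | H].
- rewrite mem_iota0 => an; apply/eqP.
  by rewrite -[a]/(val (Ordinal an)) -memT -U memU.
- apply/setP => a; rewrite memU memT.
  by apply/eqP; apply: H; rewrite mem_iota0.
Qed.

Lemma wedge_invE : wedge_inv C = blocks_inv m n P.
Proof.
rewrite /wedge_inv /blocks_inv !sumnE !big_map -big_ord_iota0; apply: eq_bigr => j _.
rewrite sumnE big_map big_filter -big_ord_iota0; apply: eq_bigr => k _.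
rewrite sumnE big_map big_filter -big_ord_iota0 -sum1_card.
under [RHS]eq_bigr => a _ do rewrite -sum1_count -big_ord_iota0.
by rewrite pair_big_dep; apply: eq_bigl => -[a b]; rewrite inE /= !memC.
Qed.

Lemma wcoefE (K : fieldType) (T : {set 'I_n}) (Q : pred nat) :
  (forall a : 'I_n, (a \in T) = Q a) -> wcoef K C T = (wcoefz m n P Q)%:~R.
Proof.
move=> memT; rewrite /wcoef /wcoefz blocks_disjointE (blocks_coverE memT) wedge_invE.
by case: ifP; rewrite ?rmorphXn ?rmorphN1.
Qed.
End WcoefReflection.

Definition ord_seq (n : nat) (l : seq nat) : bool := [seq a <- iota 0 n | a \in l] == l.

Definition oset (n : nat) (l : seq nat) : {set 'I_n} := [set a : 'I_n | val a \in l].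

Lemma card_oset n l : ord_seq n l -> #|oset n l| = size l.
Proof.
move=> /eqP {2}<-; rewrite size_filter.
by apply: card_ord_count => a; rewrite inE.
Qed.

Lemma oset_inj n x y : ord_seq n x -> ord_seq n y -> oset n x = oset n y -> x = y.
Proof.
move=> /eqP ex /eqP ey eqxy; rewrite -ex -ey; apply: eq_in_filter => a; rewrite mem_iota0 => an.
by have := congr1 (fun X : {set _} => Ordinal an \in X) eqxy; rewrite !inE.
Qed.

Section Reduction.
Variables (n : nat) (D : seq (seq nat)) (Al Sl : seq (seq nat)).
Local Notation r := (nrows D).
Local Notation d := (dd D).

Definition mult (i s : nat) : nat := count_mem s.+1 (nth [::] D i).

(* A labelling gives, for each row i and each a in A_i, the column s such that
   a lies in the block B_{i,s}; its entries outside A_i are irrelevant. *)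
Definition labelled (lab : seq (seq nat)) (i s a : nat) : bool :=
  (a \in nth [::] Al i) && (nth 0%N (nth [::] lab i) a == s).

Definition label_choices (xs : seq (seq nat)) (i a : nat) : seq nat :=
  if a \in nth [::] Al i
  then [seq s <- iota 0 d | (a \in nth [::] xs s) && (0 < mult i s)%N]
  else [:: 0%N].

Definition labellings (xs : seq (seq nat)) : seq (seq (seq nat)) :=
  cartprod [seq cartprod [seq label_choices xs i a | a <- iota 0 n] | i <- iota 0 r].

Definition comultz (lab : seq (seq nat)) (i : nat) : int :=
  if all (fun s => count (labelled lab i s) (iota 0 n) == mult i s) (iota 0 d)
  then wcoefz d n (labelled lab i) (fun a => a \in nth [::] Al i) else 0.

Definition termz (xs lab : seq (seq nat)) : int :=
  prodz [seq comultz lab i | i <- iota 0 r] *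
  prodz [seq wcoefz r n (fun i => labelled lab i s) (fun a => a \in nth [::] xs s)
        | s <- iota 0 d].

Definition column_choices : seq (seq (seq nat)) := cartprod (nseq d Sl).

Definition rho_countz : int :=
  sumz [seq sumz [seq termz xs lab | lab <- labellings xs] | xs <- column_choices].

Lemma labellingsP xs lab :
  reflect (size lab = r /\ forall i, (i < r)%N ->
             size (nth [::] lab i) = n /\
             forall a, (a < n)%N -> nth 0%N (nth [::] lab i) a \in label_choices xs i a)
          (lab \in labellings xs).
Proof.
apply: (iffP (cartprodP [::] _ _)); rewrite !size_map size_iota => -[-> H]; split=> // i ir.
- have := H i ir; rewrite (nth_map 0%N) ?size_iota // nth_iota // add0n.
  move=> /(cartprodP 0%N); rewrite size_map size_iota => -[-> Ha]; split=> // a an.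
  by have := Ha a an; rewrite (nth_map 0%N) ?size_iota // nth_iota.
- rewrite (nth_map 0%N) ?size_iota // nth_iota // add0n; have [sz Ha] := H i ir.
  apply/(cartprodP 0%N); rewrite size_map size_iota; split=> // a an.
  by rewrite (nth_map 0%N) ?size_iota // nth_iota //; apply: Ha.
Qed.

Lemma mem_column_choices xs (s : 'I_d) : xs \in column_choices -> nth [::] xs s \in Sl.
Proof.
by case/(cartprodP [::]) => _; rewrite size_nseq => /(_ s (ltn_ord s)); rewrite nth_nseq ltn_ord.
Qed.

Variable K : fieldType.
Local Notation columnsT := {ffun 'I_d -> {set 'I_n}}.
Local Notation blocksT := {ffun 'I_r -> {ffun 'I_d -> {set 'I_n}}}.

Definition Abasis : {ffun 'I_r -> {set 'I_n}} := [ffun i : 'I_r => oset n (nth [::] Al i)].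
Definition tbasis : tensorIn K n D := [ffun A => (A == Abasis)%:R].
Definition Spoint : 'I_(NV n) -> K := fun j => (enum_val j \in map (oset n) Sl)%:R.

Definition Tfun (xs : seq (seq nat)) : columnsT := [ffun s : 'I_d => oset n (nth [::] xs s)].
Definition Bfun (lab : seq (seq nat)) : blocksT :=
  [ffun i : 'I_r => [ffun s : 'I_d => [set a : 'I_n | labelled lab i s a]]].

Definition comult_part (B : blocksT) : K :=
  \prod_(i < r) comult_coef K (@ecount D i) (Abasis i) (B i).
Definition term (T : columnsT) (B : blocksT) : K :=
  comult_part B * \prod_(s < d) wcoef K (fun i => B i s) (T s).

Lemma stepA_tbasis B : stepA tbasis B = comult_part B.
Proof.
rewrite ffunE (bigD1 Abasis) //= ffunE eqxx mul1r [X in _ + X]big1 ?addr0 // => A /negbTE nA.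
by rewrite ffunE nA mul0r.
Qed.

Lemma meval_rho_tbasis : meval Spoint (rho tbasis) =
  \sum_(T : columnsT | [forall s, T s \in map (oset n) Sl]) stepB (stepA tbasis) T.
Proof.
rewrite /rho /stepC raddf_sum /= [RHS]big_mkcond; apply: eq_bigr => T _.
rewrite mevalZ rmorph_prod /=.
under eq_bigr do rewrite /var mevalXU /Spoint enum_rankK.
case: (boolP [forall s, T s \in _]) => [/forallP TS | /forallPn [s /negbTE Ts]].
- by rewrite big1 ?mulr1 // => s _; rewrite TS.
- by rewrite (bigD1 s) //= Ts mul0r mulr0.
Qed.

Hypotheses (Sl_ord : all (ord_seq n) Sl) (Sl_size : all (fun l => size l == 3) Sl)
           (Sl_uniq : uniq Sl).

Lemma Tfun_inj : {in column_choices &, injective Tfun}.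
Proof.
move=> xs ys xsP ysP eqT.
have [[sx _] [sy _]] := (cartprodP [::] _ _ xsP, cartprodP [::] _ _ ysP).
apply: (eq_from_nth (x0 := [::])) => [|s]; first by rewrite sx sy.
rewrite sx size_nseq => sd.
have := congr1 (fun T : columnsT => T (Ordinal sd)) eqT; rewrite !ffunE.
apply: oset_inj; apply: (allP Sl_ord); exact: (mem_column_choices (Ordinal sd)).
Qed.

Lemma sum_columns (M : columnsT -> K) :
  \sum_(T : columnsT | [forall s, T s \in map (oset n) Sl]) M T =
  \sum_(xs <- column_choices) M (Tfun xs).
Proof.
have TfunS xs : xs \in column_choices -> [forall s, Tfun xs s \in map (oset n) Sl].
  by move=> xsP; apply/forallP => s; rewrite ffunE map_f // mem_column_choices.
rewrite big_mkcond (@sum_supp_seq _ _ _ (map Tfun column_choices)) /=.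
- by rewrite big_map; apply: eq_big_seq => xs /TfunS ->.
- rewrite map_inj_in_uniq; last exact: Tfun_inj.
  by apply: cartprod_uniq; rewrite all_nseq Sl_uniq orbT.
move=> T; case: ifP => [/forallP TS _ | _]; last by rewrite eqxx.
apply/mapP; exists [seq nth [::] Sl (index (T s) (map (oset n) Sl)) | s <- enum 'I_d].
- apply/(cartprodP [::]); rewrite size_map size_enum_ord size_nseq; split=> // s sd.
  rewrite (nth_map (Ordinal sd)) ?size_enum_ord // nth_nseq sd.
  by apply: mem_nth; rewrite -(size_map (oset n)) index_mem.
- apply/ffunP => s; rewrite ffunE (nth_map s) ?size_enum_ord ?ltn_ord // nth_ord_enum.
  rewrite -(nth_map [::] (oset n [::])) ?nth_index //.
  by rewrite -(size_map (oset n)) index_mem.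
Qed.

Lemma stepB_Tfun xs : xs \in column_choices ->
  stepB (stepA tbasis) (Tfun xs) = \sum_B term (Tfun xs) B.
Proof.
move=> xsP; rewrite ffunE.
have -> : [forall s, #|Tfun xs s| == 3%N].
  apply/forallP => s; rewrite ffunE card_oset; last exact/(allP Sl_ord)/mem_column_choices.
  exact/(allP Sl_size)/mem_column_choices.
by apply: eq_bigr => B _; rewrite stepA_tbasis.
Qed.

Lemma term_neq0 (T : columnsT) (B : blocksT) : term T B != 0 ->
  [/\ forall i s, #|B i s| = ecount i s, forall i, wcoef K (B i) (Abasis i) != 0
    & forall s, wcoef K (fun i => B i s) (T s) != 0].
Proof.
rewrite mulf_eq0 negb_or => /andP [/prodf_neq0 Hc /prodf_neq0 Hw].
split=> [i s | i | s]; last exact: Hw.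
- by move: (Hc i isT); rewrite /comult_coef; case: ifP => [/forallP/(_ s)/eqP | _]; rewrite ?eqxx.
- by move: (Hc i isT); rewrite /comult_coef; case: ifP; rewrite ?eqxx.
Qed.

Definition labelling_of (B : blocksT) : seq (seq nat) :=
  [seq [seq block_index (B i) a | a <- enum 'I_n] | i <- enum 'I_r].

Lemma nth_labelling_of (B : blocksT) (i : 'I_r) (a : 'I_n) :
  nth 0%N (nth [::] (labelling_of B) i) a = block_index (B i) a.
Proof.
rewrite (nth_map i) ?size_enum_ord ?ltn_ord // nth_ord_enum.
by rewrite (nth_map a) ?size_enum_ord ?ltn_ord // nth_ord_enum.
Qed.

Lemma Bfun_labelling_of (B : blocksT) :
  (forall i, wcoef K (B i) (Abasis i) != 0) -> Bfun (labelling_of B) = B.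
Proof.
move=> BA; apply/ffunP => i; apply/ffunP => s; apply/setP => a.
have [Bdisj BU] := wcoef_neq0 (BA i).
by rewrite !ffunE inE /labelled nth_labelling_of (mem_block Bdisj BU) ffunE inE.
Qed.

Lemma labelling_of_mem xs (B : blocksT) : term (Tfun xs) B != 0 -> labelling_of B \in labellings xs.
Proof.
case/term_neq0 => Bsize BA BT.
apply/labellingsP; rewrite size_map size_enum_ord; split=> // i ir.
rewrite -[i]/(val (Ordinal ir)); set i' := Ordinal ir; split=> [|a an].
  by rewrite (nth_map i') ?size_enum_ord // size_map size_enum_ord.
rewrite -[a]/(val (Ordinal an)) nth_labelling_of; set a' := Ordinal an.
have [Bdisj BU] := wcoef_neq0 (BA i').
rewrite /label_choices; case: ifP => Aa.
- have : a' \in Abasis i' by rewrite ffunE inE.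
  rewrite -BU => /bigcupP [s _ Bs].
  have := Bs; rewrite (mem_block Bdisj BU) => /andP [_ /eqP ->].
  rewrite mem_filter mem_iota0 ltn_ord andbT.
  have [_ TU] := wcoef_neq0 (BT s).
  have : a' \in Tfun xs s by rewrite -TU; apply/bigcupP; exists i'.
  rewrite ffunE inE => -> /=.
  by rewrite /mult -[count_mem _ _]/(ecount i' s) -Bsize; apply/card_gt0P; exists a'.
- rewrite /block_index; case: pickP => [s Bs | _]; last by rewrite inE.
  have : a' \in Abasis i' by rewrite -BU; apply/bigcupP; exists s.
  by rewrite ffunE inE Aa.
Qed.

Lemma Bfun_inj xs : {in labellings xs &, injective Bfun}.
Proof.
move=> l1 l2 /labellingsP [S1 E1] /labellingsP [S2 E2] eqB.
apply: (eq_from_nth (x0 := [::])) => [|i]; first by rewrite S1 S2.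
rewrite S1 => ir; have [T1 F1] := E1 i ir; have [T2 F2] := E2 i ir.
apply: (eq_from_nth (x0 := 0%N)) => [|a]; first by rewrite T1 T2.
rewrite T1 => an; move: (F1 a an) (F2 a an); rewrite /label_choices.
case: ifP => Aa; last by rewrite !inE => /eqP-> /eqP->.
rewrite !mem_filter !mem_iota0 => /andP [_ l1d] /andP [_ l2d].
have := congr1 (fun B : blocksT => Ordinal an \in B (Ordinal ir) (Ordinal l1d)) eqB.
by rewrite /= !ffunE !inE /labelled /= Aa eqxx => /esym/eqP.
Qed.

Lemma sum_labellings xs :
  \sum_B term (Tfun xs) B = \sum_(lab <- labellings xs) term (Tfun xs) (Bfun lab).
Proof.
rewrite (@sum_supp_seq _ _ _ (map Bfun (labellings xs))) ?big_map //.
  rewrite map_inj_in_uniq; last exact: Bfun_inj.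
  apply: cartprod_uniq; apply/allP => _ /mapP [i _ ->]; apply: cartprod_uniq.
  apply/allP => _ /mapP [a _ ->]; rewrite /label_choices.
  by case: ifP => // _; rewrite filter_uniq ?iota_uniq.
move=> B tB; apply/mapP; exists (labelling_of B); first exact: labelling_of_mem.
by case/term_neq0: tB => _ BA _; rewrite Bfun_labelling_of.
Qed.

Lemma term_Bfun xs lab : term (Tfun xs) (Bfun lab) = (termz xs lab)%:~R.
Proof.
have memB s i (a : 'I_n) : (a \in Bfun lab i s) = labelled lab i s a by rewrite !ffunE inE.
rewrite /term /comult_part /termz intrM !intr_prodz !big_map -!big_ord_iota0.
congr (_ * _); apply: eq_bigr => i _; last by apply: wcoefE => [j|] a; rewrite ?memB ?ffunE ?inE.
rewrite /comult_coef /comultz.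
under eq_forallb do rewrite (card_ord_count (memB _ i)).
rewrite (forall_ord_iota0 _ (fun s => count (labelled lab i s) (iota 0 n) == mult i s)).
case: ifP => _; last by rewrite mulr0z.
by apply: wcoefE => [j|] a; rewrite ?memB ?ffunE ?inE.
Qed.

Lemma meval_rho_tbasis_count : meval Spoint (rho tbasis) = rho_countz%:~R.
Proof.
rewrite meval_rho_tbasis sum_columns /rho_countz intr_sumz big_map.
apply: eq_big_seq => xs xsP; rewrite stepB_Tfun // sum_labellings intr_sumz big_map.
by apply: eq_bigr => lab _; exact: term_Bfun.
Qed.

Hypotheses (Al_ord : all (ord_seq n) Al) (Al_size : map size Al == map size D).

Lemma tbasis_in_domain : in_domain tbasis.
Proof.
move=> A; rewrite ffunE; have [-> _ i | _] := eqVneq A Abasis; last by rewrite eqxx.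
have ir : (i < size Al)%N by rewrite -(size_map size) (eqP Al_size) size_map ltn_ord.
rewrite ffunE card_oset ?(allP Al_ord) ?mem_nth //.
have := congr1 (nth 0%N ^~ i) (eqP Al_size).
by rewrite !(nth_map [::]) // -(size_map size) -(eqP Al_size) size_map.
Qed.
End Reduction.

Lemma rho_nonzero_of_count (K : fieldType) n D (Al Sl : seq (seq nat)) :
  [pchar K] =i pred0 -> all (ord_seq n) Al -> map size Al == map size D ->
  all (ord_seq n) Sl -> all (fun l => size l == 3) Sl -> uniq Sl ->
  rho_countz n D Al Sl != 0 -> rho_nonzero K n D.
Proof.
move=> charK0 Al_ord Al_size Sl_ord Sl_size Sl_uniq cnt.
exists (tbasis n D Al K); split; first exact: tbasis_in_domain.
apply: contra_neq cnt => rho0; apply/eqP.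
by rewrite -(intr_eq0_pchar0 _ charK0) -meval_rho_tbasis_count // rho0 meval0.
Qed.

Unset Implicit Arguments.

Theorem lemma5p3 (K : closedFieldType) (charK0 : [pchar K] =i pred0) :
  [/\ rho_nonzero K 7 D1, rho_nonzero K 8 D2,
      rho_nonzero K 9 D3 & rho_nonzero K 9 D4].
Proof.
(* The row sets A_i of the basis tensor, then the triples S (points of W numbered from 0). *)
split.
- by apply: (rho_nonzero_of_count charK0 (Al := [:: iota 0 7; [:: 0]; [:: 1]])
      (Sl := [:: [:: 0; 1; 2]; [:: 0; 3; 4]; [:: 1; 5; 6]])); vm_compute.
- by apply: (rho_nonzero_of_count charK0 (Al := [:: iota 0 8; [:: 0; 1; 2]; [:: 3]])
      (Sl := [:: [:: 0; 4; 5]; [:: 0; 6; 7]; [:: 1; 2; 3]])); vm_compute.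
- by apply: (rho_nonzero_of_count charK0 (Al := [:: iota 0 9; [:: 0]; [:: 1]; [:: 2]])
      (Sl := [:: [:: 0; 1; 2]; [:: 0; 3; 4]; [:: 1; 5; 6]; [:: 2; 7; 8]])); vm_compute.
- by apply: (rho_nonzero_of_count charK0 (Al := [:: iota 0 9; [:: 0; 1; 2; 3]; [:: 4; 5]])
      (Sl := [:: [:: 0; 3; 4]; [:: 1; 2; 5]; [:: 6; 7; 8]])); vm_compute.
Qed.
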